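(* Let $K$ be the irreducible cyclic code of length $n$ over $GF(q)$ with monic irreducible parity-check polynomial of degree $m>1$ and order $n\ne q^m-1$, and let $d=\gcd(q-1,n)$, $r=n/d$, $R=(q^m-1)/(q-1)$, $b=(q-1)/d$, and $s$ the number of cycles of nonzero codewords of $K$. If $s=b$, then $K$ is equidistant, i.e. all nonzero codewords of $K$ have the same Hamming weight. Moreover, the conditions $s=b$, $r=R$, and $\gcd(s,R)=1$ are equivalent.
   Context: Let $q>2$ be a prime power. $A_n=GF(q)[x]/(x^n-1)$; Hamming weight of an element = number of nonzero coefficients of its representative of degree $<n$. The order of $h$ is the least $e\ge1$ with $h\mid x^e-1$. $K$ is the ideal of $A_n$ generated by $(x^n-1)/h(x)$. The cycle of nonzero $z$ is $\{x^iz:i\ge0\}$. *)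

From HB Require Import structures.
From mathcomp Require Import all_boot all_order all_algebra all_field.
From Stdlib Require Import ClassicalEpsilon.
Set Implicit Arguments. Unset Strict Implicit. Unset Printing Implicit Defensive.
Import GRing.Theory.
Local Open Scope ring_scope.

Definition pbool (P : Prop) : bool :=
  if excluded_middle_informative P then true else false.

Section Cyclic.
Variable F : finFieldType.

Definition poly_order (h : {poly F}) (n : nat) : Prop :=
  [/\ (0 < n)%N, h %| 'X^n - 1 &
      forall e : nat, (0 < e)%N -> h %| 'X^e - 1 -> (n <= e)%N].

(* Elements of A_n = GF(q)[x]/(x^n-1) are represented by their coefficient
   vectors (representative of degree < n); rVpoly gives the representative. *)

Definition code (n : nat) (h : {poly F}) : {set 'rV[F]_n} :=
  [set v : 'rV[F]_n | pbool (exists a : {poly F},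
      rVpoly v = (a * (('X^n - 1) %/ h)) %% ('X^n - 1))].

Definition wt (n : nat) (v : 'rV[F]_n) : nat := #|[set i : 'I_n | v 0 i != 0]|.

Definition cycle_of (n : nat) (z : 'rV[F]_n) : {set 'rV[F]_n} :=
  [set w : 'rV[F]_n | pbool (exists i : nat,
      rVpoly w = ('X^i * rVpoly z) %% ('X^n - 1))].

Definition num_cycles (n : nat) (h : {poly F}) : nat :=
  #|[set cycle_of z | z in code n h :\ 0]|.

End Cyclic.

From HB Require Import structures.
From mathcomp Require Import all_boot all_order all_algebra all_field.
From Stdlib Require Import ClassicalEpsilon.
Set Implicit Arguments. Unset Strict Implicit. Unset Printing Implicit Defensive.
Import GRing.Theory.
Local Open Scope ring_scope.

(* Let P = x^n - 1 = h g, where h is irreducible of degree m and order n, and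
   let K = (g) be the irreducible cyclic code of length n over GF(q).
   1. Weights.  Multiplying a word by a nonzero scalar or by x (a cyclic
      shift modulo P) preserves its Hamming weight.
   2. Cycles.  For z = a g mod P with h not dividing a, the relation
      x^i z = x^j z amounts to h | x^i - x^j, i.e. n | i - j since h has
      order n; so every cycle of a nonzero codeword has exactly n elements,
      and the cycles partition K \ 0.  As a |-> a g mod P is injective modulo
      h, |K| = q^m, hence  s n = q^m - 1 = (q - 1) R.
   3. Arithmetic.  From s n = (q - 1) R alone, with d = gcd(q - 1, n), the
      three conditions s = b, r = R and gcd(s, R) = 1 are equivalent.
   4. Equidistance.  If h | c x^i - c' x^j with c, c' nonzero, then raising
      to the power q - 1 shows n | (q - 1)(i - j), hence r | i - j.  So the
      words c x^i z (c <> 0, i < r) are (q - 1) r = b n distinct nonzero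
      codewords of the weight of z; when s = b this is all of K \ 0. *)

Lemma pboolP (Q : Prop) : pbool Q = true <-> Q.
Proof. by rewrite /pbool; case: excluded_middle_informative. Qed.

Lemma modp_eqP (F : fieldType) (d p q : {poly F}) :
  (p %% d == q %% d) = (d %| p - q).
Proof.
apply/idP/idP => [/eqP e | /modp_eq0P e].
  by apply/modp_eq0P; rewrite modpD modpN e subrr.
by apply/eqP; apply: subr0_eq; rewrite -modpN -modpD.
Qed.

Lemma dvdp_subXX (F : fieldType) (p q : {poly F}) (k : nat) :
  p - q %| p ^+ k - q ^+ k.
Proof. by rewrite subrXX dvdp_mulr. Qed.

Lemma dvdp_Xn_sub1 (F : fieldType) (j k : nat) :
  ('X^j - 1 : {poly F}) %| 'X^(j * k) - 1.
Proof. by rewrite exprM -{2}(expr1n _ k) dvdp_subXX. Qed.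

Lemma eq_of_dvdn_subn k i j : (j <= i)%N -> (i < k)%N -> (k %| i - j)%N -> i = j.
Proof.
move=> le_ji i_lt k_ij; apply/eqP; rewrite eqn_leq le_ji andbT -subn_eq0.
apply: contraLR i_lt; rewrite -lt0n -leqNgt => /dvdn_leq /(_ k_ij) /leq_trans.
by apply; apply: leq_subr.
Qed.

Section Arithmetic.
Local Open Scope nat_scope.
Variables Q n s R : nat.
Hypotheses (n_gt0 : 0 < n) (Q_gt0 : 0 < Q) (R_gt0 : 0 < R).
Hypothesis count : s * n = Q * R.

Local Notation d := (gcdn Q n).

Lemma coprime_div_gcd : coprime (n %/ d) (Q %/ d).
Proof.
have d_gt0 : 0 < d by rewrite gcdn_gt0 n_gt0 orbT.
rewrite /coprime -(eqn_pmul2r d_gt0) mul1n muln_gcdl.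
by rewrite !divnK ?dvdn_gcdl ?dvdn_gcdr // gcdnC.
Qed.

(* With n = (n/d) d and Q = (Q/d) d the count reads s (n/d) = (Q/d) R, which
   gives the first equivalence; conversely gcd(s, R) = 1 forces n = t R with
   s t = Q, whence d = t gcd(s, R) = t and n/d = R. *)
Lemma cycle_count_equiv :
  (s = Q %/ d <-> n %/ d = R) /\ (n %/ d = R <-> coprime s R).
Proof.
have n_rd : n = n %/ d * d by rewrite divnK // dvdn_gcdr.
have Q_bd : Q = Q %/ d * d by rewrite divnK // dvdn_gcdl.
have sb_rR : s = Q %/ d <-> n %/ d = R.
  move: n_rd Q_bd; set r := n %/ d; set b := Q %/ d; set e := d => n_rd Q_bd.
  split => [sb | rR]; apply/eqP.
    by rewrite -(eqn_pmul2l Q_gt0) -count sb {1}Q_bd n_rd mulnAC -mulnA.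
  by rewrite -(eqn_pmul2r n_gt0) count -rR {1}Q_bd n_rd mulnAC mulnA.
split=> //; split => [rR | cop_sR].
  by rewrite (proj2 sb_rR rR) -rR coprime_sym coprime_div_gcd.
have /dvdnP [t n_tR] : R %| n.
  by rewrite -(@Gauss_dvdr _ s) 1?coprime_sym // count dvdn_mull.
have s_t : s * t = Q.
  by apply/eqP; rewrite -(eqn_pmul2r R_gt0) -mulnA -n_tR count mulnC.
have t_gt0 : 0 < t by move: n_gt0; rewrite n_tR muln_gt0 => /andP [].
have d_t : d = t by rewrite -s_t n_tR mulnC -muln_gcdr (eqP cop_sR) muln1.
by rewrite d_t n_tR mulKn.
Qed.

End Arithmetic.

Section Shifts.
Variables (F : finFieldType) (n : nat).
Hypothesis n_gt0 : (0 < n)%N.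

Local Notation P := ('X^n - 1 : {poly F}).

Lemma size_P : size P = n.+1.
Proof. by rewrite -polyC1 size_XnsubC. Qed.

Lemma P_neq0 : P != 0.
Proof. by rewrite -size_poly_eq0 size_P. Qed.

Lemma size_modP (p : {poly F}) : (size (p %% P)%R <= n)%N.
Proof. by rewrite -ltnS -size_P ltn_modp P_neq0. Qed.

Lemma modP_small (p : {poly F}) : (size p <= n)%N -> p %% P = p.
Proof. by move=> sp; rewrite modp_small // size_P ltnS. Qed.

Lemma modP_Xn i k (p : {poly F}) : ('X^(i + n * k) * p) %% P = ('X^i * p) %% P.
Proof.
apply/eqP; rewrite modp_eqP.
have -> : 'X^(i + n * k) * p - 'X^i * p = ('X^(n * k) - 1) * ('X^i * p).
  by rewrite mulrBl mul1r exprD mulrA (mulrC 'X^(n * k)).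
by rewrite dvdp_mulr // dvdp_Xn_sub1.
Qed.

Definition pwt (p : {poly F}) : nat := #|[set j : 'I_n | p`_j != 0]|.

Lemma wt_pwt (v : 'rV[F]_n) : wt v = pwt (rVpoly v).
Proof. by apply: eq_card => j; rewrite !inE coef_rVpoly_ord. Qed.

Lemma pwtZ (c : F) (p : {poly F}) : c != 0 -> pwt (c *: p) = pwt p.
Proof.
by move=> c0; apply: eq_card => j; rewrite !inE coefZ mulf_eq0 negb_or c0.
Qed.

Lemma mulX_modP (p : {poly F}) :
  (size p <= n)%N -> ('X * p) %% P = 'X * p - (p`_n.-1)%:P * P.
Proof.
move=> sp; apply/esym/(@modpP _ _ (p`_n.-1)%:P); first by rewrite addrC subrK.
rewrite size_P ltnS; apply/leq_sizeP => j jn.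
rewrite coefB coefXM coefCM coefB coefXn coef1.
case: (ltngtP n j) jn => // [nj | <-] _; last first.
  by rewrite eqn0Ngt n_gt0 /= subr0 mulr1 subrr.
rewrite gtn_eqF ?(leq_ltn_trans _ nj) //= subrr mulr0 subr0.
by apply: (leq_sizeP _ _ sp); rewrite -ltnS prednK // (leq_ltn_trans _ nj).
Qed.

Lemma coef_mulX_modP (p : {poly F}) (j : 'I_n) : (size p <= n)%N ->
  (('X * p) %% P)`_(ordS j) = p`_j.
Proof.
move=> sp; rewrite mulX_modP // coefB coefXM coefCM coefB coefXn coef1 /=.
case: (ltngtP j.+1 n) (ltn_ord j) => [lt _ | //= | jn _].
  by rewrite modn_small // (ltn_eqF lt) /= subrr mulr0 subr0.
rewrite jn modnn eqxx eq_sym (negbTE (lt0n_neq0 n_gt0)) /= !sub0r mulrN1 opprK.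
by rewrite [in RHS](pred_Sn j) jn.
Qed.

Lemma pwt_mulXn_modP i (p : {poly F}) :
  (size p <= n)%N -> pwt (('X^i * p) %% P) = pwt p.
Proof.
elim: i => [|i IH] sp; first by rewrite expr0 mul1r modP_small.
rewrite exprS -mulrA -modp_mul -IH // /pwt -(card_preimset _ (@ordS_inj n)).
by apply: eq_card => j; rewrite !inE coef_mulX_modP // size_modP.
Qed.

Lemma in_cycle (w z : 'rV[F]_n) :
  w \in cycle_of z <-> exists i, rVpoly w = ('X^i * rVpoly z) %% P.
Proof. by rewrite inE; apply: pboolP. Qed.

Definition shift (z : 'rV[F]_n) (i : nat) : 'rV[F]_n :=
  poly_rV (('X^i * rVpoly z) %% P).

Lemma rVpoly_shift (z : 'rV[F]_n) i : rVpoly (shift z i) = ('X^i * rVpoly z) %% P.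
Proof. exact: poly_rV_K (size_modP _). Qed.

Lemma cycle_ofE (z : 'rV[F]_n) : cycle_of z = (fun i : 'I_n => shift z i) @: setT.
Proof.
apply/setP => w; apply/idP/imsetP => [/in_cycle [k wk] | [i _ ->]].
  exists (Ordinal (ltn_pmod k n_gt0)) => //; apply: (can_inj rVpolyK).
  by rewrite rVpoly_shift wk /= {1}(divn_eq k n) addnC mulnC modP_Xn.
by apply/in_cycle; exists i; exact: rVpoly_shift.
Qed.

Lemma cycle_self (z : 'rV[F]_n) : z \in cycle_of z.
Proof. by apply/in_cycle; exists 0%N; rewrite expr0 mul1r modP_small ?size_poly. Qed.

Lemma cycle_sub (z w : 'rV[F]_n) : w \in cycle_of z -> cycle_of w \subset cycle_of z.
Proof.
move/in_cycle => [i wi]; apply/subsetP => w' /in_cycle [j wj].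
by apply/in_cycle; exists (j + i)%N; rewrite wj wi modp_mul mulrA -exprD.
Qed.

(* Shifting n - 1 more times by i undoes a shift by i. *)
Lemma cycle_sym (z w : 'rV[F]_n) : w \in cycle_of z -> z \in cycle_of w.
Proof.
move/in_cycle => [i wi]; apply/in_cycle; exists (n.-1 * i)%N.
rewrite wi modp_mul mulrA -exprD -mulSnr prednK //.
by rewrite -(add0n (n * i)%N) modP_Xn expr0 mul1r modP_small ?size_poly.
Qed.

Lemma cycle_same (z w : 'rV[F]_n) : w \in cycle_of z -> cycle_of w = cycle_of z.
Proof.
by move=> wz; apply/eqP; rewrite eqEsubset !cycle_sub // cycle_sym.
Qed.

End Shifts.

Section IrreducibleCode.
Variables (F : finFieldType) (h : {poly F}) (n : nat).
Hypothesis h_irr : irreducible_poly h.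
Hypothesis h_order : poly_order h n.

Local Notation P := ('X^n - 1 : {poly F}).
Local Notation g := (('X^n - 1) %/ h : {poly F}).
Local Notation K0 := (code n h :\ 0).

Lemma order_gt0 : (0 < n)%N.
Proof. by case: h_order. Qed.

Lemma P_hg : P = h * g.
Proof. by case: h_order => _ hP _; rewrite mulrC divpK. Qed.

Lemma g_neq0 : g != 0.
Proof. by apply: contra (P_neq0 F order_gt0) => /eqP g0; rewrite P_hg g0 mulr0. Qed.

Lemma order_dvdn e : h %| 'X^e - 1 -> (n %| e)%N.
Proof.
have [_ hP n_min] := h_order.
have e_split : ('X^e - 1 : {poly F}) =
    'X^(e %% n) * ('X^(n * (e %/ n)) - 1) + ('X^(e %% n) - 1).
  by rewrite {1}(divn_eq e n) mulrBr mulr1 -exprD addrA subrK mulnC addnC.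
rewrite e_split dvdp_addr; last by rewrite dvdp_mull // (dvdp_trans hP) ?dvdp_Xn_sub1.
case: (posnP (e %% n)) => [/eqP // | e_pos /(n_min _ e_pos)].
by rewrite leqNgt ltn_mod order_gt0.
Qed.

(* x is a unit modulo h, since h(0) = 0 would give P(0) = 0. *)
Lemma coprime_h_Xn k : coprimep h 'X^k.
Proof.
apply: coprimep_expr; rewrite -[X in coprimep _ X]subr0 coprimep_XsubC.
apply/negP => /rootP h0; have : P.[0] = 0 by rewrite P_hg hornerM h0 mul0r.
rewrite !hornerE expr0n eqn0Ngt order_gt0 sub0r => /eqP.
by rewrite oppr_eq0 oner_eq0.
Qed.

Lemma h_ndvd_Xn k : ~~ (h %| 'X^k).
Proof.
have := Gauss_dvdpr 1 (coprime_h_Xn k); rewrite mulr1 dvdp1 => ->.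
by case: h_irr => h_gt1 _; rewrite neq_ltn h_gt1 orbT.
Qed.

Lemma in_code (v : 'rV[F]_n) :
  v \in code n h <-> exists a, rVpoly v = (a * g) %% P.
Proof. by rewrite inE; apply: pboolP. Qed.

Lemma code_eq0 (a : {poly F}) : ((a * g) %% P == 0) = (h %| a).
Proof. by rewrite -[_ == 0]/(P %| a * g) {1}P_hg dvdp_mul2r // g_neq0. Qed.

(* The code is a field: u times a nonzero codeword vanishes iff h | u. *)
Lemma mul_codeword_eq0 (u a : {poly F}) :
  ~~ (h %| a) -> ((u * ((a * g) %% P)) %% P == 0) = (h %| u).
Proof.
move=> ha; rewrite modp_mul mulrA code_eq0 Gauss_dvdpl //.
by rewrite irreducible_poly_coprime.
Qed.

Lemma nonzero_codeword (z : 'rV[F]_n) :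
  z \in K0 -> exists2 a, rVpoly z = (a * g) %% P & ~~ (h %| a).
Proof.
move=> /setD1P [z0 /in_code [a za]]; exists a => //; apply: contra z0 => ha.
by rewrite -[z]rVpolyK za (eqP (etrans (code_eq0 a) ha)) linear0.
Qed.

Lemma Xn_inj_mod_h (i j : nat) : (i < n)%N -> (j < n)%N -> h %| 'X^i - 'X^j -> i = j.
Proof.
wlog le_ji : i j / (j <= i)%N => [sym | i_lt _].
  case/orP: (leq_total j i) => [ji | ij i_lt j_lt hd]; first exact: sym.
  by apply/esym/sym => //; rewrite -dvdpNr opprB.
have -> : ('X^i - 'X^j : {poly F}) = 'X^j * ('X^(i - j) - 1).
  by rewrite mulrBr mulr1 -exprD subnKC.
by rewrite Gauss_dvdpr ?coprime_h_Xn // => /order_dvdn /(eq_of_dvdn_subn le_ji i_lt).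
Qed.

Lemma card_cycle (z : 'rV[F]_n) : z \in K0 -> #|cycle_of z| = n.
Proof.
move=> /nonzero_codeword [a za ha].
rewrite (cycle_ofE order_gt0) card_imset ?cardsT ?card_ord // => i j.
move/(congr1 rVpoly); rewrite !(rVpoly_shift order_gt0) => /eqP.
rewrite modp_eqP -mulrBl za => /modp_eq0P/eqP.
by rewrite mul_codeword_eq0 // => /Xn_inj_mod_h ij; apply/val_inj/ij.
Qed.

Lemma cycle_nonzero_code (z : 'rV[F]_n) : z \in K0 -> cycle_of z \subset K0.
Proof.
move=> /nonzero_codeword [a za ha]; apply/subsetP => w /in_cycle [i wi].
apply/setD1P; split; last first.
  by apply/in_code; exists ('X^i * a); rewrite wi za modp_mul mulrA.
apply: contra (h_ndvd_Xn i) => /eqP w0.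
by rewrite -(mul_codeword_eq0 ('X^i) ha) -za -wi w0 linear0.
Qed.

Lemma card_nonzero_code_cycles : #|K0| = (num_cycles n h * n)%N.
Proof.
apply: card_uniform_partition => [A /imsetP [z zK ->] | ]; first exact: card_cycle.
apply/and3P; split.
- rewrite eqEsubset; apply/andP; split; apply/subsetP => x.
    by move/bigcupP => [A /imsetP [z zK ->]]; apply/subsetP/cycle_nonzero_code.
  move=> xK; apply/bigcupP; exists (cycle_of x); last exact: cycle_self order_gt0 x.
  by apply/imsetP; exists x.
- apply/trivIsetP => A B /imsetP [a _ ->] /imsetP [b _ ->] AB.
  rewrite -setI_eq0; apply/eqP/setP => x; rewrite in_set0.
  apply/negbTE; apply: contra AB => /setIP [xa xb].
  by rewrite -(cycle_same order_gt0 xa) -(cycle_same order_gt0 xb).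
- by apply/imsetP => -[z _ e]; have := cycle_self order_gt0 z; rewrite -e inE.
Qed.

(* a mod h |-> a g mod P is a bijection onto the code, so |K| = q^m. *)
Lemma card_code m : size h = m.+1 -> #|code n h| = (#|F| ^ m)%N.
Proof.
move=> size_h; have h_neq0 : h != 0 by rewrite -size_poly_eq0 size_h.
pose enc (a : 'rV[F]_m) : 'rV[F]_n := poly_rV ((rVpoly a * g) %% P).
have rV_enc a : rVpoly (enc a) = (rVpoly a * g) %% P.
  by rewrite poly_rV_K ?(size_modP order_gt0).
have -> : code n h = enc @: setT.
  apply/setP => v; apply/idP/imsetP => [/in_code [a va] | [a _ ->]]; last first.
    by apply/in_code; exists (rVpoly a).
  exists (poly_rV (a %% h)) => //; apply: (can_inj rVpolyK).
  rewrite rV_enc poly_rV_K ?va; last by rewrite -ltnS -size_h ltn_modp.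
  apply/eqP; rewrite modp_eqP -mulrBl {1}(divp_eq a h) addrK.
  by rewrite -mulrA -P_hg dvdp_mull.
rewrite card_imset ?cardsT ?card_mx ?mul1n // => x y /(congr1 rVpoly).
rewrite !rV_enc => /eqP; rewrite modp_eqP -mulrBl -linearB => /modp_eq0P/eqP.
rewrite code_eq0 => h_xy; apply/eqP; rewrite -subr_eq0 -(inj_eq (can_inj rVpolyK)).
rewrite linear0; apply: contraTT h_xy => nz; apply/negP => /(dvdp_leq nz).
by rewrite size_h leqNgt ltnS size_poly.
Qed.

Lemma card_nonzero_code m : size h = m.+1 -> #|K0| = (#|F| ^ m - 1)%N.
Proof.
move=> size_h; have := cardsD1 0 (code n h); rewrite (card_code size_h).
have -> : (0 : 'rV[F]_n) \in code n h.
  by apply/in_code; exists 0; rewrite linear0 mul0r mod0p.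
by move=> ->; rewrite add1n subn1.
Qed.

Local Notation q := #|F|.
Local Notation d := (gcdn (q - 1) n).
Local Notation r := (n %/ d)%N.
Local Notation b := ((q - 1) %/ d)%N.

Lemma expf_card_sub1 (c : F) : c != 0 -> c ^+ (q - 1) = 1.
Proof.
move=> c0; apply: (mulIf c0); rewrite mul1r -exprSr subn1 prednK ?expf_card //.
by apply/card_gt0P; exists 0.
Qed.

Lemma r_dvdn_of_Xn_scalar k (c : F) : c != 0 -> h %| 'X^k - c%:P -> (r %| k)%N.
Proof.
move=> c0 hk; have d_gt0 : (0 < d)%N by rewrite gcdn_gt0 order_gt0 orbT.
have : h %| ('X^k) ^+ (q - 1) - (c%:P) ^+ (q - 1) by rewrite (dvdp_trans hk) ?dvdp_subXX.
rewrite -rmorphXn expf_card_sub1 // -exprM => /order_dvdn.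
move=> n_kq; have : (r %| k * b)%N.
  by rewrite -(dvdn_pmul2r d_gt0) -mulnA !divnK ?dvdn_gcdl ?dvdn_gcdr.
by rewrite Gauss_dvdl // coprime_div_gcd // order_gt0.
Qed.

Lemma scaled_Xn_inj_mod_h (c c' : F) (i j : nat) : c != 0 -> c' != 0 ->
  (i < r)%N -> (j < r)%N -> h %| c *: 'X^i - c' *: 'X^j -> i = j /\ c = c'.
Proof.
wlog le_ji : c c' i j / (j <= i)%N => [sym | c0 c'0 i_lt j_lt hd].
  case/orP: (leq_total j i) => [ji | ij c0 c'0 i_lt j_lt hd]; first exact: sym.
  have [-> ->] // : j = i /\ c' = c by apply: sym => //; rewrite -dvdpNr opprB.
have ij : i = j.
  have X_ij : c *: 'X^i - c' *: 'X^j = 'X^j * (c *: 'X^(i - j) - c'%:P) :> {poly F}.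
    by rewrite mulrBr -scalerAr -exprD subnKC // mulrC mul_polyC.
  move: hd; rewrite X_ij Gauss_dvdpr ?coprime_h_Xn // -(dvdpZr _ _ (invr_neq0 c0)).
  rewrite scalerBr scalerA mulVf // scale1r -mul_polyC -polyCM.
  move/r_dvdn_of_Xn_scalar; rewrite mulf_neq0 ?invr_neq0 // => /(_ isT).
  exact: eq_of_dvdn_subn.
split => //; subst j; apply/eqP; rewrite -subr_eq0; apply: contraLR hd => cc.
by rewrite -scalerBl dvdpZr // h_ndvd_Xn.
Qed.

Definition scaled_shift (z : 'rV[F]_n) (x : F * 'I_r) : 'rV[F]_n :=
  poly_rV (x.1 *: (('X^(x.2) * rVpoly z) %% P)).

Lemma rVpoly_scaled_shift z x :
  rVpoly (scaled_shift z x) = x.1 *: (('X^(x.2) * rVpoly z) %% P).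
Proof.
by rewrite poly_rV_K // (leq_trans (size_scale_leq _ _)) ?(size_modP order_gt0).
Qed.

Local Notation units_shifts := (setX [set~ (0 : F)] [set: 'I_r]).

Lemma scaled_shift_nonzero_code z x :
  z \in K0 -> x \in units_shifts -> scaled_shift z x \in K0.
Proof.
move=> /nonzero_codeword [a za ha]; case: x => c i.
rewrite in_setX in_setC1 => /andP [c0 _]; apply/setD1P; split; last first.
  apply/in_code; exists (c *: 'X^i * a).
  by rewrite rVpoly_scaled_shift /= za modp_mul -modpZl !scalerAl mulrA.
apply: contra (h_ndvd_Xn i) => /eqP /(congr1 rVpoly) /eqP.
by rewrite rVpoly_scaled_shift linear0 scaler_eq0 (negbTE c0) za mul_codeword_eq0.
Qed.

Lemma scaled_shift_inj z : z \in K0 -> {in units_shifts &, injective (scaled_shift z)}.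
Proof.
move=> /nonzero_codeword [a za ha] [c i] [c' j]; rewrite !inE !andbT /= => c0 c'0.
move/(congr1 rVpoly); rewrite !rVpoly_scaled_shift /= -!modpZl !scalerAl.
move/eqP; rewrite modp_eqP -mulrBl za => /modp_eq0P/eqP.
rewrite mul_codeword_eq0 // => /(scaled_Xn_inj_mod_h c0 c'0 (ltn_ord i) (ltn_ord j)).
by case=> ij ->; congr pair; apply: val_inj.
Qed.

(* When s = b, counting shows every nonzero codeword is some c x^i z. *)
Lemma scaled_shifts_cover z : num_cycles n h = b -> z \in K0 ->
  scaled_shift z @: units_shifts = K0.
Proof.
move=> s_b zK; apply/eqP; rewrite eqEcard; apply/andP; split.
  by apply/subsetP => _ /imsetP [x xD ->]; apply: scaled_shift_nonzero_code.
rewrite card_in_imset; last exact: scaled_shift_inj.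
rewrite cardsX cardsC1 cardsT card_ord card_nonzero_code_cycles s_b subn1.
by rewrite divn_mulAC ?dvdn_gcdl // -muln_divA ?dvdn_gcdr.
Qed.

Lemma equidistant z u : num_cycles n h = b -> z \in K0 -> u \in K0 -> wt u = wt z.
Proof.
move=> s_b zK; rewrite -(scaled_shifts_cover s_b zK) => /imsetP [[c i]].
rewrite !inE andbT => c0 ->.
rewrite !wt_pwt rVpoly_scaled_shift pwtZ // pwt_mulXn_modP ?order_gt0 ?size_poly //.
Qed.

End IrreducibleCode.

Theorem corollary5 (F : finFieldType) (h : {poly F}) (m n : nat) :
  (2 < #|F|)%N ->
  h \is monic -> irreducible_poly h -> size h = m.+1 -> (1 < m)%N ->
  poly_order h n -> n <> (#|F| ^ m - 1)%N ->
  let q := #|F| in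
  let d := gcdn (q - 1) n in
  let r := (n %/ d)%N in
  let R := ((q ^ m - 1) %/ (q - 1))%N in
  let b := ((q - 1) %/ d)%N in
  let s := num_cycles n h in
  (s = b -> forall u v : 'rV[F]_n, u \in code n h -> v \in code n h ->
       u != 0 -> v != 0 -> wt u = wt v)
  /\ (s = b <-> r = R) /\ (r = R <-> coprime s R).
Proof.
move=> q_gt2 _ h_irr size_h m_gt1 h_order _ q d r R b s.
have q1_gt0 : (0 < q - 1)%N by rewrite subn_gt0 ltnW.
have qm_R : (q ^ m - 1 = (q - 1) * R)%N.
  by rewrite /R mulnC divnK // !subn1 predn_exp dvdn_mulr.
have R_gt0 : (0 < R)%N.
  rewrite -(ltn_pmul2l q1_gt0) muln0 -qm_R subn_gt0 -(expn0 q) ltn_exp2l.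
    exact: ltnW m_gt1.
  exact: ltnW q_gt2.
have count : (s * n = (q - 1) * R)%N.
  by rewrite -card_nonzero_code_cycles // (card_nonzero_code h_order size_h).
split; last exact: cycle_count_equiv (order_gt0 h_order) q1_gt0 R_gt0 count.
move=> s_b u v uK vK u0 v0.
by apply: (equidistant h_irr h_order s_b); rewrite in_setD1 ?u0 ?v0.
Qed.
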